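(* Let $\mathcal{A}\subset\mathbb{R}^d$ be a finite multiset with $|\mathcal{A}|=(d+1)n+1$, $n\in\mathbb{Z}_{\ge 0}$, and let $l:\mathbb{R}^d\to\mathbb{R}$ be a linear function. Then: (1) if at least $dn+1$ points $\bar{x}$ of $\mathcal{A}$ satisfy $l(\bar{x})\le m$ for some $m\in\mathbb{R}$, then $l(y)\le m$ for every $y\in\varPsi(\mathcal{A},n)$; (2) if at least $dn+1$ points $\bar{x}$ of $\mathcal{A}$ satisfy $l(\bar{x})\ge M$ for some $M\in\mathbb{R}$, then $l(z)\ge M$ for every $z\in\varPsi(\mathcal{A},n)$.
   Context: Cardinality of a multiset counts points with multiplicity. For a finite multiset $\mathcal{A}\subset\mathbb{R}^d$ of cardinality $m'$ and integer $0\le n\le m'$, $\mathcal{S}(\mathcal{A},n)$ is the collection of all sub-multisets of $\mathcal{A}$ of cardinality $m'-n$, and $\varPsi(\mathcal{A},n)=\bigcap_{S\in\mathcal{S}(\mathcal{A},n)}\mathrm{Conv}(S)$, where $\mathrm{Conv}$ denotes convex hull. *)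

From HB Require Import structures.
From mathcomp Require Import all_boot all_order all_algebra.
From mathcomp Require Import reals.
Set Implicit Arguments. Unset Strict Implicit. Unset Printing Implicit Defensive.
Import Order.TTheory GRing.Theory Num.Theory.
Local Open Scope ring_scope.

(* A finite multiset of cardinality N in R^d is represented by a labelled
   family A : 'I_N -> 'rV[R]_d (labels carry multiplicity).  Sub-multisets of
   cardinality N - n correspond to label sets S : {set 'I_N} with #|S| = N - n. *)

Definition conv_sub (R : realType) (d N : nat) (A : 'I_N -> 'rV[R]_d)
  (S : {set 'I_N}) (x : 'rV[R]_d) : Prop :=
  exists w : 'I_N -> R,
    [/\ forall i, 0 <= w i,
        forall i, i \notin S -> w i = 0,
        \sum_(i < N) w i = 1
      & x = \sum_(i < N) w i *: A i].

Definition Psi (R : realType) (d N : nat) (A : 'I_N -> 'rV[R]_d) (n : nat)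
  (y : 'rV[R]_d) : Prop :=
  forall S : {set 'I_N}, #|S| = (N - n)%N -> conv_sub A S y.

From HB Require Import structures.
From mathcomp Require Import all_boot all_order all_algebra.
From mathcomp Require Import reals.
Import Order.TTheory GRing.Theory Num.Theory.
Set Implicit Arguments.
Unset Strict Implicit.
Unset Printing Implicit Defensive.
Local Open Scope ring_scope.

(* Among the at least dn + 1 = |A| - n points of A in the half-space
   {l <= m}, pick a sub-multiset of cardinality exactly |A| - n: Psi(A, n)
   lies in its convex hull, hence in the convex half-space.  The lower bound
   is the upper bound for -l. *)

Lemma subset_of_card (T : finType) (B : {set T}) (k : nat) :
  (k <= #|B|)%N -> exists2 S : {set T}, S \subset B & #|S| = k.
Proof.
move=> le_kB; exists [set x in take k (enum B)].
  by apply/subsetP=> x; rewrite inE => /mem_take; rewrite mem_enum.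
rewrite cardsE; move/card_uniqP: (take_uniq k (enum_uniq (mem B))) => ->.
by rewrite size_takel // -cardE.
Qed.

Section ConvexHull.

Variables (R : realType) (d N : nat) (A : 'I_N -> 'rV[R]_d).

Lemma conv_subS (S B : {set 'I_N}) (y : 'rV[R]_d) :
  S \subset B -> conv_sub A S y -> conv_sub A B y.
Proof.
move=> sSB [w [w_ge0 w_out w_sum1 ->]]; exists w; split=> // i iB.
by apply: w_out; apply: contra iB; apply: (subsetP sSB).
Qed.

Lemma conv_sub_le (l : {linear 'rV[R]_d -> R^o}) (m : R) (S : {set 'I_N})
    (y : 'rV[R]_d) :
  {in S, forall i, l (A i) <= m} -> conv_sub A S y -> l y <= m.
Proof.
move=> le_Sm [w [w_ge0 w_out w_sum1 ->]].
rewrite linear_sum -[m]mul1r -w_sum1 mulr_suml; apply: ler_sum => i _.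
rewrite linearZ /=; have [iS | iNS] := boolP (i \in S).
  by rewrite ler_wpM2l ?le_Sm.
by rewrite w_out // scale0r mul0r.
Qed.

Lemma Psi_conv_sub (n : nat) (B : {set 'I_N}) (y : 'rV[R]_d) :
  (N - n <= #|B|)%N -> Psi A n y -> conv_sub A B y.
Proof.
by case/subset_of_card=> S sSB cardS /(_ S cardS); apply: conv_subS.
Qed.

Lemma Psi_le (l : {linear 'rV[R]_d -> R^o}) (n : nat) (m : R) :
  (N - n <= #|[set i | (l (A i) <= m)%R]|)%N ->
  forall y, Psi A n y -> l y <= m.
Proof.
move=> le_card y /(Psi_conv_sub le_card); apply: conv_sub_le => i.
by rewrite inE.
Qed.

End ConvexHull.

Theorem lemma4 (R : realType) (d n : nat)
  (A : 'I_((d.+1 * n).+1) -> 'rV[R]_d) (l : {linear 'rV[R]_d -> R^o}) :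
  (forall m : R, ((d * n).+1 <= #|[set i | (l (A i) <= m)%R]|)%N ->
     forall y, Psi A n y -> l y <= m) /\
  (forall M : R, ((d * n).+1 <= #|[set i | (M <= l (A i))%R]|)%N ->
     forall z, Psi A n z -> M <= l z).
Proof.
have cardN : ((d.+1 * n).+1 - n)%N = (d * n).+1 by rewrite mulSn -addnS addKn.
split=> [m | M]; rewrite -cardN; first exact: Psi_le.
move=> le_card z /(@Psi_le _ _ _ A (\- l) n (- M)); rewrite lerN2; apply.
by apply: leq_trans le_card _; apply/eq_leq/eq_card=> i; rewrite !inE /= lerN2.
Qed.
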